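(* Let $A$ be a ring and $b,s,t\in A$. (a) If $t\in\bigcap_{i\ge0}(bA+s^iA)$, then $W(b,s,t)=\bigcap_{i\ge0}(bA+s^iA)$. (b) If $bA+sA+tA=A$, or if $b,s,t$ is an $A$-regular sequence, then $W(b,s,t)=\bigcap_{i\ge0}(bA+sA)^i$.
   Context: For elements $b,s,t$ of a ring $A$, define ideals $W_i,J_i$ ($i\ge0$) by $W_0=A$, $J_0=(W_0:t)=A$, and for $i\ge1$: $W_i=bJ_{i-1}+s^iA$ and $J_i=(W_i:t)$, where $(W:t)=\{x\in A: tx\in W\}$. Set $W(b,s,t)=\bigcap_{i\ge0}W_i$. *)

From HB Require Import structures.
From mathcomp Require Import all_boot all_order all_algebra.
Set Implicit Arguments. Unset Strict Implicit. Unset Printing Implicit Defensive.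
Import GRing.Theory.
Local Open Scope ring_scope.

(* Ideals of a commutative ring A are represented as predicates A -> Prop. *)

Section IdealDefs.
Variable A : comPzRingType.

Definition ideal2 (a c : A) : A -> Prop :=
  fun x => exists y z : A, x = a * y + c * z.
Definition ideal3 (a c d : A) : A -> Prop :=
  fun x => exists y z w : A, x = a * y + c * z + d * w.

Definition colon (W : A -> Prop) (t : A) : A -> Prop := fun x => W (t * x).

Definition idealMul (I J : A -> Prop) : A -> Prop :=
  fun x => exists (n : nat) (f g : 'I_n -> A),
    (forall k, I (f k) /\ J (g k)) /\ x = \sum_(k < n) f k * g k.

Fixpoint idealPow (I : A -> Prop) (i : nat) : A -> Prop :=
  match i with
  | 0 => fun _ => True
  | i'.+1 => idealMul (idealPow I i') I
  end.

Fixpoint Wi (b s t : A) (i : nat) : A -> Prop :=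
  match i with
  | 0 => fun _ => True
  | i'.+1 => fun x => exists y z : A,
      colon (Wi b s t i') t y /\ x = b * y + s ^+ i'.+1 * z
  end.

Definition Ji (b s t : A) (i : nat) : A -> Prop := colon (Wi b s t i) t.

Definition Wbst (b s t : A) : A -> Prop := fun x => forall i, Wi b s t i x.

Definition regular_seq3 (b s t : A) : Prop :=
  [/\ (forall x : A, b * x = 0 -> x = 0),
      (forall x : A, ideal2 b 0 (s * x) -> ideal2 b 0 x),
      (forall x : A, ideal2 b s (t * x) -> ideal2 b s x)
    & ~ ideal3 b s t 1].
End IdealDefs.

From mathcomp Require Import all_boot all_order all_algebra ring.
Local Open Scope ring_scope.
Import GRing.Theory.
Set Implicit Arguments. Unset Strict Implicit.

(* Let Q_0 = A and Q_{i+1} = b Q_i + s^{i+1} A; expanding products shows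
   Q_i = (bA + sA)^i.  If every Q_i is t-saturated, i.e. (Q_i : t) = Q_i, then
   the recursions defining W_i and Q_i coincide and W_i = Q_i.  Saturation holds
   when bA + sA + tA = A, because then Q_i + tA = A for all i; and it holds for
   a regular sequence b, s, t by induction on i, using that t is regular modulo
   bA + s^n A and s is regular modulo bA.  In case (a) the same induction gives
   W_i = bA + s^i A directly, since t lies in that ideal and so J_i = A. *)

Section PowersOfBS.
Variables (A : comPzRingType) (b s : A).

Fixpoint Qi (i : nat) : A -> Prop :=
  match i with
  | 0 => fun _ => True
  | i'.+1 => fun x => exists u v, Qi i' u /\ x = b * u + s ^+ i'.+1 * v
  end.

Lemma Qi0 i : Qi i 0.
Proof.
elim: i => [|i IH] //=; exists 0, 0; split=> //; ring.
Qed.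

Lemma QiD i x y : Qi i x -> Qi i y -> Qi i (x + y).
Proof.
elim: i x y => [|i IH] x y //= [u1 [v1 [Qu1 ->]]] [u2 [v2 [Qu2 ->]]].
exists (u1 + u2), (v1 + v2); split; [exact: IH | ring].
Qed.

Lemma QiMr i x c : Qi i x -> Qi i (x * c).
Proof.
elim: i x => [|i IH] x //= [u [v [Qu ->]]].
exists (u * c), (v * c); split; [exact: IH | ring].
Qed.

Lemma QiMl i c x : Qi i x -> Qi i (c * x).
Proof. by rewrite mulrC; apply: QiMr. Qed.

Lemma Qi_sum i n (f : 'I_n -> A) :
  (forall k, Qi i (f k)) -> Qi i (\sum_(k < n) f k).
Proof. by move=> Qf; elim/big_ind: _ => //; [exact: Qi0 | exact: QiD]. Qed.

Lemma Qi_exps i v : Qi i (s ^+ i * v).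
Proof. case: i => [|i] //=; exists 0, v; split; [exact: Qi0 | ring]. Qed.

Lemma QiS_mulb i x : Qi i x -> Qi i.+1 (b * x).
Proof. by move=> Qx; exists x, 0; split=> //; ring. Qed.

Lemma QiS_muls i x : Qi i x -> Qi i.+1 (s * x).
Proof.
elim: i x => [|i IH] x /= => [_ | [u [v [Qu ->]]]].
  by exists 0, x; split=> //; rewrite expr1; ring.
exists (s * u), v; split; first exact: IH.
rewrite [s ^+ i.+2]exprS; ring.
Qed.

Lemma QiS_mul_bs i x y z : Qi i x -> Qi i.+1 (x * (b * y + s * z)).
Proof.
move=> Qx; rewrite mulrDr.
by apply: QiD; rewrite mulrCA; [apply: QiS_mulb | apply: QiS_muls]; apply: QiMr.
Qed.

Lemma QiS_ideal2 i x : Qi i.+1 x -> ideal2 b (s ^+ i.+1) x.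
Proof. by move=> [u [v [_ ->]]]; exists u, v. Qed.

Lemma idealPow_exps i v : idealPow (ideal2 b s) i (s ^+ i * v).
Proof.
elim: i v => [|i IH] v //=.
exists 1%N, (fun _ => s ^+ i * v), (fun _ => s); split.
  by move=> _; split; [exact: IH | exists 0, 1; ring].
by rewrite big_ord1 exprS; ring.
Qed.

Lemma Qi_idealPow i x : Qi i x <-> idealPow (ideal2 b s) i x.
Proof.
elim: i x => [|i IH] x //=; split.
  move=> [u [v [Qu ->]]].
  exists 2%N, (fun k => if val k == 0%N then u else s ^+ i * v),
              (fun k => if val k == 0%N then b else s); split.
    move=> k; case: ifP => _; split.
    - exact/IH.
    - by exists 1, 0; ring.
    - exact: idealPow_exps.
    - by exists 0, 1; ring.
  by rewrite big_ord_recr big_ord1 /= exprS; ring.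
move=> [n [f [g [fg ->]]]]; apply: (@Qi_sum i.+1) => k.
by have [/IH Qf [y [z ->]]] := fg k; apply: QiS_mul_bs.
Qed.

End PowersOfBS.

Section Colon.
Variables (A : comPzRingType) (b s t : A).

Lemma Wi_Qi (Qi_sat : forall i x, Qi b s i (t * x) -> Qi b s i x) i x :
  Wi b s t i x <-> Qi b s i x.
Proof.
elim: i x => [|i IH] x //=; split=> -[y [z [Jy ->]]]; exists y, z; split=> //.
  exact/Qi_sat/IH.
exact/IH/QiMl.
Qed.

Lemma Wi_ideal2_exps (t_in : forall i, ideal2 b (s ^+ i) t) i x :
  Wi b s t i x <-> ideal2 b (s ^+ i) x.
Proof.
elim: i x => [|i IH] x /=.
  by split=> // _; exists 0, x; rewrite expr0; ring.
split=> [[y [z [_ ->]]] | [y [z ->]]]; exists y, z; split=> //.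
apply/IH; have [y0 [z0 ->]] := t_in i.
by exists (y0 * y), (z0 * y); ring.
Qed.

Section Comaximal.
Hypothesis bst_comax : ideal3 b s t 1.

Lemma Qi_comax i : exists e w, Qi b s i e /\ 1 = e + t * w.
Proof.
elim: i => [|i [e [w [Qe e_w]]]]; first by exists 1, 0; split=> //; ring.
have [y [z [w0 yzw0]]] := bst_comax.
exists (e * (b * y + s * z)), (e * w0 + w * (b * y + s * z + t * w0)).
split; first exact: QiS_mul_bs.
by rewrite -[LHS]mulr1 {1}e_w {1}yzw0; ring.
Qed.

Lemma Qi_colon_comax i x : Qi b s i (t * x) -> Qi b s i x.
Proof.
move=> Qtx; have [e [w [Qe e_w]]] := Qi_comax i.
have -> : x = e * x + t * x * w by rewrite -[LHS]mul1r e_w; ring.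
by apply: QiD; apply: QiMr.
Qed.

End Comaximal.

Section Regular.
Hypothesis b_reg : forall x : A, b * x = 0 -> x = 0.
Hypothesis s_reg : forall x : A, ideal2 b 0 (s * x) -> ideal2 b 0 x.
Hypothesis t_reg : forall x : A, ideal2 b s (t * x) -> ideal2 b s x.

Lemma exps_regular_mod_b n y : ideal2 b 0 (s ^+ n * y) -> ideal2 b 0 y.
Proof.
elim: n y => [|n IH] y; first by rewrite expr0 mul1r.
by rewrite exprSr -mulrA => /IH /s_reg.
Qed.

Lemma t_regular_mod_b_exps n y :
  ideal2 b (s ^+ n) (t * y) -> ideal2 b (s ^+ n) y.
Proof.
elim: n y => [|n IH] y; first by move=> _; exists 0, y; rewrite expr0; ring.
move=> [u [v tyE]].
have [p [q yE]] : ideal2 b (s ^+ n) y.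
  by apply: IH; exists u, (s * v); rewrite tyE exprS; ring.
have [r [r' rE]] : ideal2 b 0 (t * q - s * v).
  apply: (@exps_regular_mod_b n); exists (u - t * p), 0.
  have -> : s ^+ n * (t * q - s * v)
            = t * (b * p + s ^+ n * q) - s ^+ n.+1 * v - b * (t * p).
    by rewrite exprSr; ring.
  by rewrite -yE tyE; ring.
have [p' [q' qE]] : ideal2 b s q.
  by apply: t_reg; exists r, v; rewrite -[t * q](subrK (s * v)) rE; ring.
by exists (p + s ^+ n * p'), q'; rewrite yE qE exprSr; ring.
Qed.

Lemma Qi_colon_regular i x : Qi b s i (t * x) -> Qi b s i x.
Proof.
elim: i x => [|i IH] x // Qtx.
have [p [q xE]] := t_regular_mod_b_exps (QiS_ideal2 Qtx).
have [u [v [Qu txE]]] := Qtx.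
have [r [r' rE]] : ideal2 b 0 (v - t * q).
  apply: (@exps_regular_mod_b i.+1); exists (t * p - u), 0.
  have -> : s ^+ i.+1 * (v - t * q)
            = b * u + s ^+ i.+1 * v - t * (b * p + s ^+ i.+1 * q) + b * (t * p - u).
    by ring.
  by rewrite -txE -xE subrr; ring.
have tpE : t * p = u + s ^+ i.+1 * r.
  apply/eqP; rewrite -subr_eq0; apply/eqP/b_reg.
  have -> : b * (t * p - (u + s ^+ i.+1 * r))
            = t * (b * p + s ^+ i.+1 * q)
              - (b * u + s ^+ i.+1 * (b * r + 0 * r' + t * q)).
    by ring.
  by rewrite -rE subrK -xE -txE subrr.
exists p, q; split=> //; apply: IH.
by rewrite tpE; apply: QiD => //; rewrite exprS -mulrA; apply/QiMl/Qi_exps.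
Qed.

End Regular.
End Colon.

Theorem lemma3p4 (A : comPzRingType) (b s t : A) :
  ((forall i : nat, ideal2 b (s ^+ i) t) ->
     forall x : A, Wbst b s t x <-> (forall i : nat, ideal2 b (s ^+ i) x)) /\
  ((forall x : A, ideal3 b s t x) \/ regular_seq3 b s t ->
     forall x : A, Wbst b s t x <-> (forall i : nat, idealPow (ideal2 b s) i x)).
Proof.
split=> [t_in x | bst x].
  by split=> Wx i; apply/(Wi_ideal2_exps t_in).
have Qi_sat i y : Qi b s i (t * y) -> Qi b s i y.
  case: bst => [comax | [b_reg s_reg t_reg _]].
    exact: (Qi_colon_comax (comax 1)).
  exact: Qi_colon_regular.
by split=> Wx i;
  [apply/Qi_idealPow/(Wi_Qi Qi_sat) | apply/(Wi_Qi Qi_sat)/Qi_idealPow].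
Qed.
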